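(* Let $X$ be a finite-dimensional real Banach space and let $A \subset X$ be a bounded set with $d(0, A) > 0$. Let $I$ be an index set with $m$ elements and $\{x_i : i \in I\} \subset S_X$, and assume $\overline{A} \cap \bigcup_{i \in I} x_i^{\perp} = \emptyset$. If $\{B(y_i, r_i)\}_{i \in I}$ covers $A$ for some $y_i \in \mathbb{R}^+ x_i$ and $r_i > 0$ with $\|y_i\| \ge r_i$ for all $i \in I$, then for every selection $\phi$ of the subdifferential mapping $\partial\|\cdot\|$, $\sup_{i \in I} \phi(x_i)(x) > 0$ for every $x \in \overline{A}$.
   Context: $d(0,A)=\inf\{\|a\|:a\in A\}$; $\overline{A}$ is the closure. $x_i^{\perp} = \{ y \in X : \|x_i + \mu y\| \ge \|x_i\| \text{ for all } \mu \in \mathbb{R}\}$ (Birkhoff–James orthogonality). $\mathbb{R}^+ x_i = \{ t x_i : t > 0\}$; $B(c,r) = \{ z : \|c - z\| < r\}$. $\partial\|x\| = \{ x^* \in S_{X^*} : x^*(x) = \|x\|\}$ for $x \neq 0$; a selection of $\partial\|\cdot\|$ is a map $\phi$ with $\phi(x) \in \partial\|x\|$ for each non-zero $x$. *)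

From HB Require Import structures.
From mathcomp Require Import all_boot all_order all_algebra.
From mathcomp Require Import all_classical all_reals all_analysis.
Set Implicit Arguments. Unset Strict Implicit. Unset Printing Implicit Defensive.
Import Order.TTheory GRing.Theory Num.Theory.
Import numFieldNormedType.Exports.
Local Open Scope classical_set_scope.
Local Open Scope ring_scope.

Section Defs.
Context {R : realType} {X : normedModType R}.

Definition finite_dim : Prop :=
  exists (n : nat) (b : 'I_n -> X), forall x : X,
    exists c : 'I_n -> R, x = \sum_(i < n) c i *: b i.

Definition lin_functional (f : X -> R) : Prop :=
  forall (a : R) (u v : X), f (a *: u + v) = a * f u + f v.

Definition in_dual_sphere (f : X -> R) : Prop :=
  lin_functional f /\
  (forall y : X, `|y| <= 1 -> `|f y| <= 1) /\
  (forall e : R, 0 < e -> exists y : X, `|y| <= 1 /\ 1 - e < `|f y|).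

Definition subdiff_norm (x : X) : set (X -> R) :=
  [set f | in_dual_sphere f /\ f x = `|x|].

Definition subdiff_selection (phi : X -> (X -> R)) : Prop :=
  forall x : X, x != 0 -> subdiff_norm x (phi x).

(* Birkhoff-James orthogonal complement x^perp *)
Definition bj_perp (x : X) : set X :=
  [set y | forall mu : R, `|x| <= `|x + mu *: y|].

Definition open_ball (c : X) (r : R) : set X := [set z | `|c - z| < r].

Definition dist0_pos (A : set X) : Prop :=
  exists d : R, 0 < d /\ forall a, A a -> d <= `|a|.

Definition norm_bounded (A : set X) : Prop :=
  exists M : R, forall a, A a -> `|a| <= M.

End Defs.

From HB Require Import structures.
From mathcomp Require Import all_boot all_order all_algebra.
From mathcomp Require Import all_classical all_reals all_analysis.
From mathcomp Require Import lra.
Import Order.TTheory GRing.Theory Num.Theory.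
Import numFieldNormedType.Exports.
Local Open Scope classical_set_scope.
Local Open Scope ring_scope.

(* Suppose phi(x_i)(z) <= 0 for every i, and write f = phi(x_i). If f z = 0,
   then 1 = f (x_i + mu z) <= |x_i + mu z| puts z in the Birkhoff-James
   complement of x_i, which is excluded. So f z < 0, and for y_i = t x_i,
   |y_i - z| >= f (t x_i - z) = t - f z > t = |y_i| >= r_i: z lies outside
   the closed ball of radius r_i around y_i. Outside finitely many closed
   balls there is a whole neighbourhood of z, disjoint from A, contradicting
   z in closure A. *)

Section LinearFunctional.
Context {R : realType} {X : normedModType R} (f : X -> R).
Hypothesis f_lin : lin_functional f.

Lemma lin_functional0 : f 0 = 0.
Proof.
have := f_lin 1 0 0; rewrite scaler0 addr0 mul1r.
by move/(congr1 (fun t => t - f 0)); rewrite subrr addrK => <-.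
Qed.

Lemma lin_functionalZ a u : f (a *: u) = a * f u.
Proof. by have := f_lin a u 0; rewrite addr0 lin_functional0 addr0. Qed.

Lemma lin_functionalD u v : f (u + v) = f u + f v.
Proof. by have := f_lin 1 u v; rewrite scale1r mul1r. Qed.

Lemma lin_functionalB u v : f (u - v) = f u - f v.
Proof. by rewrite lin_functionalD -scaleN1r lin_functionalZ mulN1r. Qed.

End LinearFunctional.

Section Subdifferential.
Context {R : realType} {X : normedModType R}.

Lemma dual_sphere_norm_le {f : X -> R} v : in_dual_sphere f -> `|f v| <= `|v|.
Proof.
move=> [f_lin [f_bounded _]].
have [->|v0] := eqVneq v 0; first by rewrite lin_functional0 // !normr0.
have v_gt0 : 0 < `|v| by rewrite normr_gt0.
have := f_bounded (`|v|^-1 *: v).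
rewrite normrZ normfV normr_id mulVf ?gt_eqF // lexx => /(_ isT).
by rewrite lin_functionalZ // normrM normfV normr_id ler_pdivrMl // mulr1.
Qed.

Lemma subdiff_norm_ker_bj_perp {x z : X} {f : X -> R} :
  subdiff_norm x f -> f z = 0 -> bj_perp x z.
Proof.
move=> [f_dual fx] fz mu; have [f_lin _] := f_dual; rewrite -fx.
have := dual_sphere_norm_le (x + mu *: z) f_dual.
rewrite lin_functionalD // lin_functionalZ // fz mulr0 addr0.
exact: le_trans (ler_norm _).
Qed.

Lemma subdiff_norm_ray_lt {x z : X} {f : X -> R} (t : R) :
  subdiff_norm x f -> f z < 0 -> t * `|x| < `|t *: x - z|.
Proof.
move=> [f_dual fx] fz_lt0; have [f_lin _] := f_dual.
have := dual_sphere_norm_le (t *: x - z) f_dual.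
rewrite lin_functionalB // lin_functionalZ // fx => le_norm.
apply: lt_le_trans (le_trans (ler_norm _) le_norm).
by rewrite ltrDl oppr_gt0.
Qed.

End Subdifferential.

Lemma closure_cover_balls_le {R : realType} {X : normedModType R}
    {I : finType} {A : set X} {c : I -> X} {r : I -> R} {z : X} :
  A `<=` \bigcup_(i in [set: I]) open_ball (c i) (r i) ->
  closure A z -> exists i, `|c i - z| <= r i.
Proof.
move=> A_cover zA; apply/not_existsP => far.
have far_near : \forall w \near z, forall i, r i < `|c i - w|.
  apply: filter_forall => i.
  have e_gt0 : 0 < `|c i - z| - r i by rewrite subr_gt0 ltNge; apply/negP/far.
  apply: filterS (nbhsx_ballx z _ e_gt0) => w; rewrite -ball_normE /= => zw.
  have := ler_distD w (c i) z; rewrite (distrC w z); lra.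
have [a [Aa a_far]] := zA _ far_near.
have [i _] := A_cover a Aa; rewrite /open_ball /=.
by apply/negP; rewrite -leNgt ltW.
Qed.

Theorem mainTheorem9 (R : realType) (X : completeNormedModType R)
  (A : set X) (m : nat) (x : 'I_m -> X) (y : 'I_m -> X) (r : 'I_m -> R) :
  finite_dim (X := X) ->
  norm_bounded A ->
  dist0_pos A ->
  (forall i, `|x i| = 1) ->
  closure A `&` (\bigcup_(i in [set: 'I_m]) bj_perp (x i)) = set0 ->
  (forall i, exists t : R, 0 < t /\ y i = t *: x i) ->
  (forall i, 0 < r i) ->
  (forall i, r i <= `|y i|) ->
  A `<=` \bigcup_(i in [set: 'I_m]) open_ball (y i) (r i) ->
  forall phi : X -> (X -> R), subdiff_selection phi ->
  forall z : X, closure A z -> exists i : 'I_m, 0 < phi (x i) z.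
Proof.
move=> _ _ _ x_unit no_perp y_ray _ r_le A_cover phi phi_sel z zA.
apply/not_existsP => phi_le0.
have [i z_near] := closure_cover_balls_le A_cover zA.
have x_neq0 : x i != 0 by rewrite -normr_eq0 x_unit oner_neq0.
have sub_x := phi_sel _ x_neq0.
have phi_neq0 : phi (x i) z != 0.
  apply/eqP => phi0; suff : (closure A `&` \bigcup_(j in [set: 'I_m]) bj_perp (x j)) z.
    by rewrite no_perp.
  split=> //; exists i; first by [].
  exact: subdiff_norm_ker_bj_perp sub_x phi0.
have phi_lt0 : phi (x i) z < 0 by rewrite lt_neqAle phi_neq0 leNgt; apply/negP/phi_le0.
move: (r_le i) z_near; have [t [t_gt0 ->]] := y_ray i.
rewrite normrZ x_unit mulr1 gtr0_norm // => r_le_t.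
apply/negP; rewrite -ltNge (le_lt_trans r_le_t) //.
by have := subdiff_norm_ray_lt t sub_x phi_lt0; rewrite x_unit mulr1.
Qed.
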